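(* Let $X$ be a transitive BE-algebra, $k\in(-0.5,0]$, and $(X,f)$ an $([e],[e]\vee[c_k])$-ideal of $X$. For $t\in[-1,0)$ let $Q(f;t)=\{x\in X: f(x)+t+k+1<0\}$. Then for every $t\in[-1,\tfrac{-k-1}{2})$, the set $Q(f;t)$ is either empty or an ideal of $X$.
   Context: A BE-algebra is a set $X$ with a binary operation $*$ and a distinguished element $1$ such that for all $x,y,z\in X$: $x*x=1$, $x*1=1$, $1*x=x$, and $x*(y*z)=y*(x*z)$. Write $x\le y$ iff $x*y=1$. A BE-algebra is transitive if $y*z\le(x*y)*(x*z)$ for all $x,y,z\in X$. An ideal of $X$ is a nonempty subset $I\subseteq X$ such that $x*s\in I$ for all $x\in X$, $s\in I$, and $(s*(q*x))*x\in I$ for all $x\in X$ and $s,q\in I$. An $N$-structure on $X$ is a pair $(X,f)$ where $f:X\to[-1,0]$ is any function. Fix $k\in(-1,0]$. For $x\in X$ and $t\in[-1,0)$, write $\frac{x}{t}[e]f$ if $f(x)\le t$, and $\frac{x}{t}[c_k]f$ if $f(x)+t+k+1<0$; write $\frac{x}{t}([e]\vee[c_k])f$ if at least one of these holds. The $N$-structure $(X,f)$ is an $([e],[e]\vee[c_k])$-ideal of $X$ if for all $x,y,z\in X$ and all $t,r\in[-1,0)$: (i) $f(y)\le t$ implies $\frac{x*y}{t}([e]\vee[c_k])f$; (ii) $f(x)\le t$ and $f(y)\le r$ together imply $\frac{(x*(y*z))*z}{\max\{t,r\}}([e]\vee[c_k])f$. *)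

From Stdlib Require Import Reals.
Open Scope R_scope.

Section BE.
Variables (X : Type) (op : X -> X -> X) (one : X).

Definition BE_algebra : Prop :=
  (forall x, op x x = one) /\
  (forall x, op x one = one) /\
  (forall x, op one x = x) /\
  (forall x y z, op x (op y z) = op y (op x z)).

Definition BE_le (x y : X) : Prop := op x y = one.

Definition BE_transitive : Prop :=
  forall x y z, BE_le (op y z) (op (op x y) (op x z)).

Definition BE_ideal (I : X -> Prop) : Prop :=
  (exists s, I s) /\
  (forall x s, I s -> I (op x s)) /\
  (forall x s q, I s -> I q -> I (op (op s (op q x)) x)).

Definition N_structure (f : X -> R) : Prop :=
  forall x, -1 <= f x <= 0.

Definition pt_e (f : X -> R) (x : X) (t : R) : Prop := f x <= t.
Definition pt_ck (f : X -> R) (k : R) (x : X) (t : R) : Prop := f x + t + k + 1 < 0.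
Definition pt_e_or_ck (f : X -> R) (k : R) (x : X) (t : R) : Prop :=
  pt_e f x t \/ pt_ck f k x t.

Definition e_eck_ideal (k : R) (f : X -> R) : Prop :=
  (forall x y t, -1 <= t < 0 -> f y <= t -> pt_e_or_ck f k (op x y) t) /\
  (forall x y z t r, -1 <= t < 0 -> -1 <= r < 0 ->
     f x <= t -> f y <= r ->
     pt_e_or_ck f k (op (op x (op y z)) z) (Rmax t r)).

Definition Qset (k : R) (f : X -> R) (t : R) : X -> Prop :=
  fun x => f x + t + k + 1 < 0.

End BE.

From Stdlib Require Import Reals Lra Classical_Prop.
Open Scope R_scope.

(* Let c = -t-k-1, so that Q(f;t) = {x | f x < c}.  The hypothesis
   t < (-k-1)/2 says exactly that t < c.

   - If c > 0, every point lies in Q(f;t) because f takes values in [-1,0];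
     the whole carrier is an ideal (it contains 1).
   - If c <= 0 and s lies in Q(f;t), then u = max(f s, t) is an admissible
     level in [-1,0) with t <= u < c ("good level", below).  Good levels are
     closed under max, and whenever a point y satisfies y_u ([e] v [c_k]) f
     for a good level u, the point y lies in Q(f;t).  Feeding the levels
     max(f s, t) and max(f q, t) into the two defining conditions of an
     ([e],[e] v [c_k])-ideal then shows that Q(f;t), when nonempty, is an
     ideal. *)

Section QsetIdeal.

Variables (X : Type) (op : X -> X -> X) (one : X).
Variables (k : R) (f : X -> R) (t : R).

(* A level u at which the ideal conditions of f may be invoked, and whose
   conclusions land in Q(f;t). *)
Definition good_level (u : R) : Prop :=
  -1 <= u < 0 /\ t <= u /\ u + t + k + 1 < 0.

Lemma BE_ideal_full (I : X -> Prop) : (forall x, I x) -> BE_ideal X op I.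
Proof.
  intros HI; split; [exists one; apply HI | split; intros; apply HI].
Qed.

Lemma Qset_full :
  N_structure X f -> 0 < - t - k - 1 -> forall x, Qset X k f t x.
Proof.
  intros Hf Hc x; unfold Qset; specialize (Hf x); lra.
Qed.

Lemma Qset_good_level (s : X) :
  N_structure X f -> -1 <= t -> 2 * t + k + 1 < 0 -> - t - k - 1 <= 0 ->
  Qset X k f t s -> good_level (Rmax (f s) t).
Proof.
  unfold Qset, good_level; intros Hf Ht Htc Hc Hs; specialize (Hf s).
  split; [| split]; [| apply Rmax_r |];
    apply Rmax_case_strong; intros; lra.
Qed.

Lemma good_level_max (u v : R) :
  good_level u -> good_level v -> good_level (Rmax u v).
Proof.
  unfold good_level; intros Hu Hv.
  apply Rmax_case_strong; intros; assumption.
Qed.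

Lemma Qset_of_good_level (u : R) (y : X) :
  good_level u -> pt_e_or_ck X f k y u -> Qset X k f t y.
Proof.
  unfold good_level, pt_e_or_ck, pt_e, pt_ck, Qset; intros Hu [Hy | Hy]; lra.
Qed.

Lemma Qset_ideal :
  N_structure X f -> e_eck_ideal X op k f ->
  -1 <= t -> 2 * t + k + 1 < 0 -> - t - k - 1 <= 0 ->
  (exists s, Qset X k f t s) -> BE_ideal X op (Qset X k f t).
Proof.
  intros Hf [Hleft Hright] Ht Htc Hc Hne.
  assert (Hgood : forall s, Qset X k f t s -> good_level (Rmax (f s) t))
    by (intros s; apply Qset_good_level; assumption).
  split; [exact Hne | split].
  - intros x s Hs.
    apply (Qset_of_good_level (Rmax (f s) t)); [now apply Hgood |].
    apply Hleft; [apply Hgood, Hs | apply Rmax_l].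
  - intros x s q Hs Hq.
    apply (Qset_of_good_level (Rmax (Rmax (f s) t) (Rmax (f q) t)));
      [now apply good_level_max; apply Hgood |].
    apply Hright; try apply Rmax_l; apply Hgood; assumption.
Qed.

End QsetIdeal.

Theorem mainTheorem11 (X : Type) (op : X -> X -> X) (one : X)
  (HBE : BE_algebra X op one) (Htr : BE_transitive X op one)
  (k : R) (Hk : - (1/2) < k <= 0)
  (f : X -> R) (Hf : N_structure X f) (Hid : e_eck_ideal X op k f)
  (t : R) (Ht : -1 <= t < (- k - 1) / 2) :
  (forall x, ~ Qset X k f t x) \/ BE_ideal X op (Qset X k f t).
Proof.
  destruct (Rle_lt_dec (- t - k - 1) 0) as [Hc | Hc].
  - destruct (classic (exists s, Qset X k f t s)) as [Hne | Hempty].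
    + right; apply (Qset_ideal X op k f t); auto; lra.
    + left; intros x Hx; apply Hempty; now exists x.
  - right; apply (BE_ideal_full X op one), Qset_full; assumption.
Qed.
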